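(* Let $q$ be a power of an odd prime with $q\equiv3\pmod4$, $d=4k+2$ with $k$ a positive integer, $S_0=\{x\in\mathbb F_q^d: x_1^2+\cdots+x_d^2=0\}$, and $A\subset S_0$ with $|A|\gg q^{d/2}$. Then $|\Delta(A)|\gg q$.
   Context: $\|x-y\|=\sum_{i}(x_i-y_i)^2$ and $\Delta(A)=\{\|x-y\|:x,y\in A\}$. $X\gg Y$ means $X\ge cY$ for a constant $c>0$ independent of $q$ (in the hypothesis, a sufficiently large such constant). *)

From HB Require Import structures.
From mathcomp Require Import all_boot all_order all_algebra all_field.
Set Implicit Arguments. Unset Strict Implicit. Unset Printing Implicit Defensive.
Import Order.TTheory GRing.Theory Num.Theory.
Local Open Scope ring_scope.

Definition sqdist (F : finFieldType) (d : nat) (x y : 'rV[F]_d) : F :=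
  \sum_(i < d) (x 0 i - y 0 i) ^+ 2.

Definition S0 (F : finFieldType) (d : nat) : {set 'rV[F]_d} :=
  [set x : 'rV[F]_d | \sum_(i < d) x 0 i ^+ 2 == 0].

Definition distset (F : finFieldType) (d : nat) (A : {set 'rV[F]_d}) : {set F} :=
  [set sqdist x y | x in A, y in A].

(* For x, y on the cone S0 one has ||x - y|| = -2 x.y, so it suffices to show
   that A spans at least q/3 dot products.  Let p(t) be the number of pairs in
   A^2 with dot product t.  Cauchy-Schwarz gives |A|^4 <= |A.A| sum_t p(t)^2,
   and a second Cauchy-Schwarz, after enlarging a sum over x in A to x in S0,
   bounds the energy sum_t p(t)^2 by the sizes of the sets S0 /\ m^perp.  These
   are counted with Gauss sums G(s) = sum_x psi(s x^2): since -1 is not a square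
   (q = 3 mod 4) and d = 2e with e odd, G(s)^d = -q^e for every s <> 0, whence
   q^2 |S0 /\ m^perp| <= q^d for m <> 0 and q |S0| = q^d - q^e (q - 1).  With
   |A| >= q^e this yields q sum_t p(t)^2 <= 3 |A|^4. *)

From mathcomp Require Import all_boot all_order all_algebra all_field.
From mathcomp Require Import fingroup action cyclic classfun character.
From mathcomp Require Import ring lra zify.
Set Implicit Arguments.
Unset Strict Implicit.
Unset Printing Implicit Defensive.

Import Order.TTheory GRing.Theory Num.Theory.
Local Open Scope ring_scope.

Lemma sqr_sum_le (R : realDomainType) (I : finType) (S : {pred I}) (f : I -> R) :
  (\sum_(i in S) f i) ^+ 2 <= #|S|%:R * \sum_(i in S) f i ^+ 2.
Proof.
have sum_sqr_diff : \sum_(i in S) \sum_(j in S) (f i - f j) ^+ 2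
    = 2%:R * (#|S|%:R * \sum_(i in S) f i ^+ 2) - 2%:R * (\sum_(i in S) f i) ^+ 2.
  have expand a b : (a - b) ^+ 2 = a ^+ 2 + (- 2%:R * a) * b + b ^+ 2 :> R by ring.
  under eq_bigr do under eq_bigr do rewrite expand.
  under eq_bigr do rewrite 2!big_split /= sumr_const -mulr_sumr.
  rewrite 2!big_split /= sumr_const sumrMnl -mulr_suml -mulr_sumr.
  rewrite -[(\sum_(i in S) f i ^+ 2) *+ _]mulr_natl; ring.
have : 0 <= \sum_(i in S) \sum_(j in S) (f i - f j) ^+ 2.
  by do 2!apply: sumr_ge0 => ? _; apply: sqr_ge0.
lra.
Qed.

Lemma sum_sqr_dev (R : comNzRingType) (T : finType) (f : T -> R) :
  \sum_t (#|T|%:R * f t - \sum_u f u) ^+ 2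
  = #|T|%:R ^+ 2 * \sum_t f t ^+ 2 - #|T|%:R * (\sum_t f t) ^+ 2.
Proof.
set Q := #|T|%:R; set s := \sum_u f u.
have expand x : (Q * x - s) ^+ 2 = Q ^+ 2 * x ^+ 2 + (- 2%:R * Q * s) * x + s ^+ 2 by ring.
under eq_bigr do rewrite expand.
rewrite 2!big_split /= sumr_const -!mulr_sumr -/s -mulr_natl; ring.
Qed.

Lemma natr_card_sep (R : pzSemiRingType) (T : finType) (B : {set T}) (P : pred T) :
  #|[set y in B | P y]|%:R = \sum_(y in B) (P y)%:R :> R.
Proof.
rewrite -sum1_card natr_sum big_mkcond [RHS]big_mkcond /=.
by apply: eq_bigr => y _; rewrite inE; case: (y \in B); case: (P y).
Qed.

Lemma sum_row_prod (R : comPzSemiRingType) (T : finType) n (h : 'I_n -> T -> R) :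
  \sum_(x : 'rV[T]_n) \prod_i h i (x 0 i) = \prod_i \sum_y h i y.
Proof.
rewrite bigA_distr_bigA /= (reindex (fun f : {ffun 'I_n -> T} => \row_i f i)) /=.
  by apply: eq_bigr => f _; apply: eq_bigr => i _; rewrite mxE.
exists (fun x : 'rV[T]_n => [ffun i => x 0 i]) => [f _|x _].
  by apply/ffunP => i; rewrite ffunE mxE.
by apply/rowP => i; rewrite mxE ffunE.
Qed.

Lemma odd_card_natr2_neq0 (F : finFieldType) : odd #|F| -> 2%:R != 0 :> F.
Proof.
move=> oddF; apply/eqP => two0.
have := expg_cardG (in_setT (1 : F : finGroupType)).
rewrite cardsT FinRing.zmodXgE -(odd_double_half #|F|) oddF -mul2n natrD natrM two0.
by rewrite mul0r addr0 => /eqP; rewrite oner_eq0.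
Qed.

Lemma card_3mod4_sqr_neqN1 (F : finFieldType) :
  (#|F| %% 4 = 3)%N -> 2%:R != 0 :> F -> forall x : F, x ^+ 2 != -1.
Proof.
move=> F3 two_neq0 x; apply/eqP => xxN1.
have q_eq : #|F| = (2 * (2 * (#|F| %/ 4) + 1)).+1 by rewrite {1}(divn_eq #|F| 4) F3; lia.
have := expf_card x; rewrite q_eq exprS exprM xxN1 -signr_odd oddD oddM /= mulrN1.
move/eqP; rewrite eq_sym -subr_eq0 opprK -mulr2n -mulr_natl mulf_eq0 (negbTE two_neq0) /=.
move=> /eqP x0; move: xxN1; rewrite x0 expr0n /= => /eqP.
by rewrite eq_sym oppr_eq0 oner_eq0.
Qed.

Lemma nontrivial_additive_char (F : finFieldType) :
  exists2 psi : F -> algC,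
    {morph psi : a b / a + b >-> a * b} /\ psi 0 = 1 & exists a, psi a != 1.
Proof.
pose G := [set: (F : finGroupType)]%G.
have abG : abelian G by apply/centsP => x _ y _; apply: FinRing.zmod_mulgC.
have Nirr_gt1 : (1 < Nirr G)%N.
  rewrite NirrE; move: abG; rewrite card_classes_abelian => /eqP ->.
  by rewrite cardsT (leq_trans _ (max_card [set (1 : F); 0])) // cards2 oner_neq0.
pose i : Iirr G := inord 1.
have i_neq0 : i != 0 by rewrite -val_eqE /= inordK.
have lin_i := char_abelianP G abG i.
exists (fun x : F => 'chi_i (x : F : finGroupType)).
  by split=> [a b|]; [exact: lin_charM | exact: lin_char1].
apply/existsP; apply: contraR i_neq0 => /existsPn chi_i1.
rewrite -irr_eq1; apply/eqP/cfunP => x; rewrite cfun1E in_setT.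
by have := chi_i1 x; rewrite negbK => /eqP ->.
Qed.

(** * The cone S0 *)

Definition dotp {F : finFieldType} {n} (x y : 'rV[F]_n) : F := \sum_i x 0 i * y 0 i.
Definition sqnorm {F : finFieldType} {n} (x : 'rV[F]_n) : F := \sum_i x 0 i ^+ 2.
Definition S0_orth {F : finFieldType} {n} (m : 'rV[F]_n) : {set 'rV[F]_n} :=
  [set x in S0 F n | dotp x m == 0].

Definition dotset {F : finFieldType} {n} (A : {set 'rV[F]_n}) : {set F} :=
  [set dotp x y | x in A, y in A].

Lemma dotpx0 (F : finFieldType) n (x : 'rV[F]_n) : dotp x 0 = 0.
Proof. by rewrite /dotp big1 // => i _; rewrite mxE mulr0. Qed.

Lemma dotpxB (F : finFieldType) n (x y z : 'rV[F]_n) :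
  dotp x (y - z) = dotp x y - dotp x z.
Proof. by rewrite /dotp -sumrB; apply: eq_bigr => i _; rewrite !mxE mulrBr. Qed.

Lemma sqnorm0 (F : finFieldType) n : sqnorm (0 : 'rV[F]_n) = 0.
Proof. by rewrite /sqnorm big1 // => i _; rewrite mxE expr0n. Qed.

Lemma S0_orth0 (F : finFieldType) n : S0_orth (0 : 'rV[F]_n) = S0 F n.
Proof. by apply/setP => x; rewrite !inE dotpx0 eqxx andbT. Qed.

Lemma sqdist_S0 (F : finFieldType) n (x y : 'rV[F]_n) :
  x \in S0 F n -> y \in S0 F n -> sqdist x y = - (2%:R * dotp x y).
Proof.
rewrite !inE => /eqP x0 /eqP y0.
transitivity (\sum_i x 0 i ^+ 2 + \sum_i y 0 i ^+ 2 - 2%:R * dotp x y).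
  by rewrite /sqdist /dotp mulr_sumr -big_split -sumrB /=; apply: eq_bigr => i _; ring.
by rewrite x0 y0 add0r sub0r.
Qed.

Lemma card_distset_S0 (F : finFieldType) n (A : {set 'rV[F]_n}) :
  2%:R != 0 :> F -> A \subset S0 F n -> #|distset A| = #|dotset A|.
Proof.
move=> two_neq0 A_S0.
have -> : distset A = [set - (2%:R * t) | t in dotset A].
  rewrite /distset /dotset !curry_imset2X -imset_comp; apply: eq_in_imset => -[x y].
  by case/setXP => xA yA; apply: sqdist_S0; apply: (subsetP A_S0).
by apply: card_imset => s t /oppr_inj /(mulfI two_neq0).
Qed.

(** * Gauss sums and isotropic vectors *)

Section QuadraticCounting.
Variable F : finFieldType.
Local Notation q := #|F|.
Hypothesis two_neq0 : 2%:R != 0 :> F.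
Hypothesis sqr_neqN1 : forall x : F, x ^+ 2 != -1.
Variables n e : nat.
Hypothesis n_eq : n = (2 * e)%N.
Hypothesis odd_e : odd e.

Definition nsqrt (c : F) := #|[set x : F | x ^+ 2 == c]|.

Lemma sum_sqr_partition (V : nmodType) (f : F -> V) :
  \sum_x f (x ^+ 2) = \sum_c f c *+ nsqrt c.
Proof.
rewrite (partition_big (fun x => x ^+ 2) predT) //=; apply: eq_bigr => c _.
rewrite (eq_bigr (fun=> f c)) => [|x /eqP -> //].
by rewrite sumr_const /nsqrt cardsE.
Qed.

Lemma sum_nsqrt : (\sum_c nsqrt c)%N = q.
Proof.
transitivity (\sum_(x : F) 1)%N; last by rewrite sum1_card.
rewrite [RHS](partition_big (fun x : F => x ^+ 2) predT) //=.
by apply: eq_bigr => c _; rewrite /nsqrt -sum1_card; apply: eq_bigl => x; rewrite inE.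
Qed.

Lemma nsqrt_le2 c : (nsqrt c <= 2)%N.
Proof.
have [x /eqP <-|none] := pickP [pred x : F | x ^+ 2 == c]; last first.
  rewrite /nsqrt (_ : [set x | _] = set0) ?cards0 //.
  by apply/setP => x; rewrite !inE; exact: none.
have roots : [set y : F | y ^+ 2 == x ^+ 2] \subset [set x; - x].
  by apply/subsetP => y; rewrite !inE eqf_sqr.
by rewrite (leq_trans (subset_leq_card roots)) // cards2; case: (_ != _).
Qed.

Lemma nsqrt0 : nsqrt 0 = 1%N.
Proof.
rewrite /nsqrt (_ : [set x : F | x ^+ 2 == 0] = [set 0]) ?cards1 //.
by apply/setP => x; rewrite !inE sqrf_eq0.
Qed.

Lemma nsqrt_opp_eq0 c : c != 0 -> (nsqrt c == 0)%N || (nsqrt (- c) == 0)%N.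
Proof.
move=> c0; rewrite /nsqrt !cards_eq0; apply/norP => -[/set0Pn [x]].
rewrite inE => /eqP xx /set0Pn [y]; rewrite inE => /eqP yy.
have y0 : y != 0 by apply: contraNneq c0 => y0; rewrite -oppr_eq0 -yy y0 expr0n.
have /eqP := sqr_neqN1 (x / y); apply.
by rewrite expr_div_n xx yy invrN mulrN mulfV.
Qed.

Lemma nsqrt_add_opp c : (nsqrt c + nsqrt (- c))%N = 2%N.
Proof.
have le2 c' : (nsqrt c' + nsqrt (- c') <= 2)%N.
  have [->|c'0] := eqVneq c' 0; first by rewrite oppr0 nsqrt0.
  by case/orP: (nsqrt_opp_eq0 c'0) => /eqP ->; rewrite ?addn0 nsqrt_le2.
have sum2 : (\sum_c (nsqrt c + nsqrt (- c)))%N = (\sum_(c : F) 2)%N.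
  rewrite big_split /= sum_nsqrt (reindex_inj oppr_inj) /=.
  under eq_bigr do rewrite opprK.
  by rewrite sum_nsqrt sum_nat_const addnn -mul2n mulnC.
have [_] := leqif_sum (P := predT) (fun c' _ => leqif_eq (le2 c')).
by rewrite sum2 eqxx => /esym/forallP/(_ c)/eqP.
Qed.

Section AdditiveCharacter.
Variable psi : F -> algC.
Hypothesis psiD : {morph psi : a b / a + b >-> a * b}.
Hypothesis psi0 : psi 0 = 1.
Hypothesis psi_nontrivial : exists a, psi a != 1.

Lemma sum_char : \sum_x psi x = 0.
Proof.
have [a psia] := psi_nontrivial.
have shift : \sum_x psi x = psi a * \sum_x psi x.
  rewrite mulr_sumr (reindex_inj (addrI a)) /=.
  by apply: eq_bigr => x _; rewrite psiD.
have : (1 - psi a) * \sum_x psi x = 0 by rewrite mulrBl -shift mul1r subrr.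
by move/eqP; rewrite mulf_eq0 subr_eq0 eq_sym (negbTE psia) => /eqP.
Qed.

Lemma sum_char_mul c : \sum_x psi (c * x) = if c == 0 then q%:R else 0.
Proof.
have [->|c0] := eqVneq c 0.
  by under eq_bigr do rewrite mul0r psi0; rewrite sumr_const.
by rewrite -[in RHS]sum_char [RHS](reindex_inj (mulfI c0)).
Qed.

Definition gauss s := \sum_x psi (s * x ^+ 2).

Lemma four_neq0 : 4%:R != 0 :> F.
Proof. by rewrite (natrM _ 2 2) mulf_neq0. Qed.

Lemma gauss_complete_square s mu : s != 0 ->
  \sum_x psi (s * x ^+ 2 + mu * x) = psi (- mu ^+ 2 / (4%:R * s)) * gauss s.
Proof.
move=> s0; rewrite (reindex_inj (addIr (- (mu / (2%:R * s))))) /= /gauss mulr_sumr.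
apply: eq_bigr => x _; rewrite -psiD; congr psi.
by field; rewrite s0 two_neq0 four_neq0.
Qed.

Lemma gauss_mul_opp s : s != 0 -> gauss s * gauss (- s) = q%:R.
Proof.
move=> s0; rewrite /gauss mulr_suml.
transitivity (\sum_x \sum_u psi (- (2%:R * s * u) * x) * psi (- s * u ^+ 2)).
  apply: eq_bigr => x _; rewrite mulr_sumr (reindex_inj (addrI x)) /=.
  by apply: eq_bigr => u _; rewrite -!psiD; congr psi; ring.
rewrite exchange_big (bigD1 0) //= [X in _ + X]big1 ?addr0 => [|u u0].
  rewrite expr0n /= !mulr0 oppr0 psi0.
  by under eq_bigr do rewrite mul0r psi0 mulr1; rewrite sumr_const.
rewrite -mulr_suml sum_char_mul oppr_eq0 !mulf_eq0.
by rewrite (negbTE s0) (negbTE u0) (negbTE two_neq0) mul0r.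
Qed.

Lemma gaussN s : s != 0 -> gauss (- s) = - gauss s.
Proof.
move=> s0; apply/eqP; rewrite -addr_eq0 /gauss.
rewrite (sum_sqr_partition (fun c => psi (s * c))).
rewrite (sum_sqr_partition (fun c => psi (- s * c))).
rewrite [X in _ + X](reindex_inj oppr_inj) -big_split /=.
under eq_bigr do rewrite mulrN -mulNr -mulrnDr nsqrt_add_opp.
by rewrite sumrMnl sum_char_mul oppr_eq0 (negbTE s0) mul0rn.
Qed.

Lemma gauss_sqr s : s != 0 -> gauss s ^+ 2 = - q%:R.
Proof. by move=> s0; rewrite -(gauss_mul_opp s0) gaussN // mulrN opprK expr2. Qed.

Lemma gauss_exp s : s != 0 -> gauss s ^+ n = - (q ^ e)%:R.
Proof.
by move=> s0; rewrite n_eq exprM gauss_sqr // exprNn natrX -signr_odd odd_e expr1 mulN1r.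
Qed.

Lemma card_S0_orth_char_sum (m : 'rV[F]_n) :
  (q * q * #|S0_orth m|)%:R
  = \sum_s \sum_t \prod_i \sum_y psi (s * y ^+ 2 + (t * m 0 i) * y).
Proof.
have indicator a : (a == 0)%:R * q%:R = \sum_s psi (a * s).
  by rewrite sum_char_mul; case: (a == 0); rewrite ?mul1r ?mul0r.
transitivity (\sum_(x : 'rV[F]_n)
    ((sqnorm x == 0)%:R * q%:R) * ((dotp x m == 0)%:R * q%:R) : algC).
  rewrite natrM -sum1_card natr_sum mulr_sumr big_mkcond /=.
  apply: eq_bigr => x _; rewrite !inE /sqnorm.
  case: (_ == 0); case: (_ == 0);
    by rewrite /= ?mulr1n ?mulr0n ?mul0r ?mulr0 ?mul1r ?mulr1 ?natrM.
under eq_bigr do rewrite !indicator mulr_suml; rewrite exchange_big /=.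
apply: eq_bigr => s _; under eq_bigr do rewrite mulr_sumr; rewrite exchange_big /=.
apply: eq_bigr => t _; rewrite -sum_row_prod; apply: eq_bigr => x _.
rewrite -psiD -(big_morph psi psiD psi0); congr psi.
by rewrite /sqnorm /dotp !mulr_suml -big_split /=; apply: eq_bigr => i _; ring.
Qed.

Lemma char_sum_linear (t : F) (m : 'rV[F]_n) :
  \prod_i \sum_y psi (0 * y ^+ 2 + (t * m 0 i) * y)
  = \prod_i (if t * m 0 i == 0 then q%:R else 0).
Proof.
by apply: eq_bigr => i _; under eq_bigr do rewrite mul0r add0r; rewrite sum_char_mul.
Qed.

Lemma char_sum_quadratic s t (m : 'rV[F]_n) : s != 0 ->
  \prod_i \sum_y psi (s * y ^+ 2 + (t * m 0 i) * y)
  = psi (- (t ^+ 2 * sqnorm m) / (4%:R * s)) * gauss s ^+ n.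
Proof.
move=> s0; under eq_bigr do rewrite gauss_complete_square //.
rewrite big_split /= prodr_const card_ord -(big_morph psi psiD psi0); congr (psi _ * _).
by rewrite /sqnorm mulr_sumr -sumrN mulr_suml; apply: eq_bigr => i _; ring.
Qed.

Lemma sum_char_inv_quadratic mu :
  \sum_(s | s != 0) \sum_t psi (- (t ^+ 2 * mu) / (4%:R * s))
  = (q * #|[set t : F | t ^+ 2 * mu == 0]|)%:R - q%:R.
Proof.
rewrite exchange_big /=.
transitivity (\sum_t ((if t ^+ 2 * mu == 0 then q%:R else 0) - 1) : algC).
  apply: eq_bigr => t _; set c := - (t ^+ 2 * mu) / 4%:R.
  transitivity (\sum_(s | s != 0) psi (c * s^-1)).
    by apply: eq_bigr => s _; rewrite /c invfM mulrA.
  rewrite (reindex_inj invr_inj) /= (eq_bigl (fun s => s != 0)) => [|s]; last first.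
    by rewrite invr_eq0.
  under eq_bigr do rewrite invrK.
  have c0 : (c == 0) = (t ^+ 2 * mu == 0).
    by rewrite /c mulf_eq0 oppr_eq0 invr_eq0 (negbTE four_neq0) orbF.
  by rewrite -c0 -sum_char_mul [in RHS](bigD1 0) //= mulr0 psi0 [1 + _]addrC addrK.
by rewrite sumrB -big_mkcond /= !sumr_const cardsE natrM mulr_natr.
Qed.

Lemma card_S0_orth_formula (m : 'rV[F]_n) :
  (q * q * #|S0_orth m|)%:R
  = \sum_t \prod_i (if t * m 0 i == 0 then q%:R else 0)
    - (q ^ e)%:R * ((q * #|[set t : F | t ^+ 2 * sqnorm m == 0]|)%:R - q%:R) :> algC.
Proof.
rewrite card_S0_orth_char_sum (bigD1 0) //=; congr (_ + _).
  by apply: eq_bigr => t _; exact: char_sum_linear.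
rewrite -sum_char_inv_quadratic mulr_sumr -sumrN; apply: eq_bigr => s s0.
rewrite mulr_sumr -sumrN; apply: eq_bigr => t _.
by rewrite char_sum_quadratic // gauss_exp // mulrN mulrC.
Qed.

End AdditiveCharacter.

Lemma sum_prod_indicator0 (R : comNzSemiRingType) :
  \sum_(t : F) \prod_(i < n) (if t * (0 : 'rV[F]_n) 0 i == 0 then q%:R else 0)
  = (q * q ^ n)%:R :> R.
Proof.
under eq_bigr do under eq_bigr do rewrite mxE mulr0 eqxx.
by under eq_bigr do rewrite prodr_const card_ord; rewrite sumr_const natrM natrX mulr_natl.
Qed.

Lemma sum_prod_indicator_neq0 (R : comNzSemiRingType) (m : 'rV[F]_n) : m != 0 ->
  \sum_(t : F) \prod_(i < n) (if t * m 0 i == 0 then q%:R else 0) = (q ^ n)%:R :> R.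
Proof.
move=> m0; have [i0 mi0] : exists i, m 0 i != 0.
  apply/existsP; apply: contraR m0 => /existsPn m_eq0.
  by apply/eqP/rowP => i; rewrite mxE; apply/eqP/negbNE.
rewrite (bigD1 0) //= [X in _ + X]big1 ?addr0 => [|t t0].
  by under eq_bigr do rewrite mul0r eqxx; rewrite prodr_const card_ord natrX.
by rewrite (bigD1 i0) //= mulf_eq0 (negbTE t0) (negbTE mi0) mul0r.
Qed.

Lemma card_S0_orth_le (m : 'rV[F]_n) : m != 0 -> (q * q * #|S0_orth m| <= q ^ n)%N.
Proof.
move=> m0; have [psi [psiD psi0] psi_nontrivial] := nontrivial_additive_char F.
have := card_S0_orth_formula psiD psi0 psi_nontrivial m.
have zeros_gt0 : (0 < #|[set t : F | (t ^+ 2 * sqnorm m == 0)%R]|)%N.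
  by apply/card_gt0P; exists 0; rewrite inE expr0n mul0r.
rewrite sum_prod_indicator_neq0 // -natrB ?leq_pmulr // -natrM => /eqP.
by rewrite eq_sym subr_eq -natrD eqr_nat => /eqP ->; apply: leq_addr.
Qed.

Lemma card_S0 : (q * #|S0 F n| + q ^ e * (q - 1) = q ^ n)%N.
Proof.
have [psi [psiD psi0] psi_nontrivial] := nontrivial_additive_char F.
have := card_S0_orth_formula psiD psi0 psi_nontrivial 0.
have q_gt0 : (0 < q)%N by apply/card_gt0P; exists 0.
rewrite sum_prod_indicator0 sqnorm0 S0_orth0.
rewrite (_ : [set t : F | _] = setT) ?cardsT; last first.
  by apply/setP => t; rewrite !inE mulr0 eqxx.
rewrite -natrB ?leq_pmulr // -natrM => /eqP.
rewrite eq_sym subr_eq -natrD eqr_nat => /eqP.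
move=> qS0; apply/eqP; rewrite -(eqn_pmul2l q_gt0) qS0.
by rewrite mulnDr mulnA mulnCA mulnBr muln1.
Qed.

End QuadraticCounting.

(** * Dot-product energy *)

Section DotProductEnergy.
Variables (F : finFieldType) (n e : nat) (A : {set 'rV[F]_n}).
Local Notation q := #|F|.
Hypothesis n_eq : n = (2 * e)%N.
Hypothesis S0_orth_small : forall m : 'rV[F]_n, m != 0 -> (q * q * #|S0_orth m| <= q ^ n)%N.
Hypothesis S0_count : (q * #|S0 F n| + q ^ e * (q - 1) = q ^ n)%N.
Hypothesis A_S0 : A \subset S0 F n.
Hypothesis A_large : (q ^ e <= #|A|)%N.

Local Notation a := (#|A|%:R : rat).
Local Notation Q := (q%:R : rat).

Definition nu x t : rat := #|[set y in A | dotp x y == t]|%:R.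
Definition pairs t := \sum_(x in A) nu x t.
Definition energy := \sum_t pairs t ^+ 2.

Lemma sum_nu x : \sum_t nu x t = a.
Proof.
under eq_bigr do rewrite /nu natr_card_sep; rewrite exchange_big /=.
rewrite -sumr_const; apply: eq_bigr => y _.
by rewrite (bigD1 (dotp x y)) //= eqxx big1 ?addr0 // => t /negbTE; rewrite eq_sym => ->.
Qed.

Lemma sum_nu_sqr x :
  \sum_t nu x t ^+ 2 = \sum_(y in A) \sum_(y' in A) (dotp x y == dotp x y')%:R.
Proof.
under eq_bigr do rewrite /nu natr_card_sep expr2 mulr_suml.
rewrite exchange_big /=; apply: eq_bigr => y _.
under eq_bigr do rewrite mulr_sumr; rewrite exchange_big /=; apply: eq_bigr => y' _.
rewrite (bigD1 (dotp x y)) //= eqxx mul1r [X in _ + X]big1 ?addr0 1?eq_sym // => t.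
by rewrite eq_sym => /negbTE ->; rewrite mul0r.
Qed.

Lemma sum_S0_nu_sqr :
  \sum_(x in S0 F n) \sum_t nu x t ^+ 2
  = \sum_(y in A) \sum_(y' in A) #|S0_orth (y - y')|%:R.
Proof.
under eq_bigr do rewrite sum_nu_sqr.
rewrite exchange_big /=; apply: eq_bigr => y _.
rewrite exchange_big /=; apply: eq_bigr => y' _.
rewrite -natr_card_sep; congr _%:R; apply: eq_card => x.
by rewrite !inE dotpxB subr_eq0.
Qed.

Lemma sum_pairs : \sum_t pairs t = a ^+ 2.
Proof.
rewrite /pairs exchange_big /=; under eq_bigr do rewrite sum_nu.
by rewrite sumr_const expr2 mulr_natr.
Qed.

Lemma pow4_le_card_dotset_energy : a ^+ 4 <= #|dotset A|%:R * energy.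
Proof.
have pairs_out t : t \notin dotset A -> pairs t = 0.
  move=> tP; apply: big1 => x xA; rewrite /nu (_ : [set y in A | _] = set0) ?cards0 //.
  apply/setP => y; rewrite !inE; apply/negbTE/andP => -[yA /eqP xy].
  by move: tP; rewrite -xy imset2_f.
have sum_in : \sum_(t in dotset A) pairs t = a ^+ 2.
  by rewrite -sum_pairs [RHS](bigID (mem (dotset A))) /= [X in _ + X]big1 ?addr0.
have -> : a ^+ 4 = (\sum_(t in dotset A) pairs t) ^+ 2 by rewrite sum_in -exprM.
apply: (le_trans (sqr_sum_le _ _)); rewrite ler_wpM2l //.
rewrite /energy [leRHS](bigID (mem (dotset A))) /=.
by rewrite lerDl sumr_ge0 // => t _; apply: sqr_ge0.
Qed.

Lemma energy_dev_le :
  Q ^+ 2 * energy - Q * a ^+ 4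
  <= a * (Q ^+ 2 * \sum_(x in S0 F n) \sum_t nu x t ^+ 2 - #|S0 F n|%:R * (Q * a ^+ 2)).
Proof.
have -> : Q ^+ 2 * energy - Q * a ^+ 4 = \sum_t (Q * pairs t - a ^+ 2) ^+ 2.
  by rewrite -[in RHS]sum_pairs sum_sqr_dev sum_pairs -exprM.
have dev_pairs t : Q * pairs t - a ^+ 2 = \sum_(x in A) (Q * nu x t - a).
  by rewrite sumrB -mulr_sumr sumr_const expr2 mulr_natr.
under eq_bigr do rewrite dev_pairs.
apply: le_trans (ler_sum _ (fun t _ => sqr_sum_le _ _)) _.
rewrite -mulr_sumr exchange_big /= ler_wpM2l //.
have -> : Q ^+ 2 * \sum_(x in S0 F n) \sum_t nu x t ^+ 2 - #|S0 F n|%:R * (Q * a ^+ 2)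
    = \sum_(x in S0 F n) \sum_t (Q * nu x t - a) ^+ 2.
  have dev_nu x : \sum_t (Q * nu x t - a) ^+ 2 = Q ^+ 2 * \sum_t nu x t ^+ 2 - Q * a ^+ 2.
    by rewrite -(sum_nu x) sum_sqr_dev.
  by under [RHS]eq_bigr do rewrite dev_nu; rewrite sumrB -mulr_sumr sumr_const mulr_natl.
rewrite [leRHS](big_setID A) /= (setIidPr A_S0) lerDl.
by do 2!apply: sumr_ge0 => ? _; apply: sqr_ge0.
Qed.

Lemma S0_energy_le :
  Q ^+ 2 * \sum_(x in S0 F n) \sum_t nu x t ^+ 2
  <= a * (Q ^+ 2 * #|S0 F n|%:R) + a ^+ 2 * (q ^ n)%:R.
Proof.
rewrite sum_S0_nu_sqr mulr_sumr.
have pair_le (y y' : 'rV[F]_n) : Q ^+ 2 * #|S0_orth (y - y')|%:R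
    <= (y == y')%:R * (Q ^+ 2 * #|S0 F n|%:R) + (q ^ n)%:R.
  have [->|yy'] := eqVneq y y'; first by rewrite subrr S0_orth0 /= mulr1n mul1r lerDl.
  by rewrite /= mulr0n mul0r add0r expr2 -!natrM ler_nat S0_orth_small // subr_eq0.
apply: le_trans (_ : _ <= \sum_(y in A) \sum_(y' in A)
    ((y == y')%:R * (Q ^+ 2 * #|S0 F n|%:R) + (q ^ n)%:R)) _.
  by apply: ler_sum => y _; rewrite mulr_sumr; apply: ler_sum => y' _; apply: pair_le.
rewrite (eq_bigr (fun=> Q ^+ 2 * #|S0 F n|%:R + a * (q ^ n)%:R)) => [|y yA].
  by rewrite sumr_const -[_ *+ #|A|]mulr_natl mulrDr [a * (a * _)]mulrA -expr2.
rewrite big_split /= -mulr_suml sumr_const mulr_natl (bigD1 y) //= big1 => [|y' /andP[_]].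
  by rewrite eqxx /= mulr1n addr0 mul1r.
by rewrite eq_sym => /negbTE ->.
Qed.

Lemma energy_le : Q * energy <= 3%:R * a ^+ 4.
Proof.
set N0 := (#|S0 F n|%:R : rat); set X := ((q ^ e)%:R : rat).
have q_gt0 : (0 < q)%N by apply/card_gt0P; exists 0.
have Q_gt0 : 0 < Q by rewrite ltr0n.
have Q_ge1 : 1 <= Q by rewrite ler1n.
have X_ge1 : 1 <= X by rewrite ler1n expn_gt0 q_gt0.
have X_le_a : X <= a by rewrite ler_nat.
have qn : (q ^ n)%:R = X ^+ 2 :> rat by rewrite n_eq mulnC expnM natrX.
have S0_eq : Q * N0 + X * (Q - 1) = X ^+ 2.
  by rewrite -qn -S0_count natrD !natrM natrB.
have dev := energy_dev_le; have S0E := S0_energy_le; rewrite -/N0 qn in dev S0E.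
have bound : Q ^+ 2 * energy - Q * a ^+ 4 <= a ^+ 2 * Q * (Q * N0) + a ^+ 3 * (X * (Q - 1)).
  apply: le_trans dev _.
  have := ler_wpM2l (ler0n _ #|A|) S0E.
  have : a ^+ 3 * (Q * N0 + X * (Q - 1)) = a ^+ 3 * X ^+ 2 by rewrite S0_eq.
  lra.
have QN0_le : Q * N0 <= a ^+ 2.
  apply: le_trans (_ : X ^+ 2 <= _); first by rewrite -S0_eq lerDl; apply: mulr_ge0; lra.
  by rewrite !expr2 ler_pM //; lra.
have XQ_le : X * (Q - 1) <= a * Q by rewrite ler_pM //; lra.
have a_gt0 : 0 < a by lra.
have t1 : a ^+ 2 * Q * (Q * N0) <= a ^+ 2 * Q * a ^+ 2.
  by rewrite ler_pM2l // mulr_gt0 // exprn_gt0.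
have t2 : a ^+ 3 * (X * (Q - 1)) <= a ^+ 3 * (a * Q) by rewrite ler_pM2l // exprn_gt0.
suff : Q ^+ 2 * energy <= Q * (3%:R * a ^+ 4) by rewrite expr2 -mulrA ler_pM2l.
have : a ^+ 2 * Q * a ^+ 2 + a ^+ 3 * (a * Q) = 2%:R * Q * a ^+ 4 by ring.
lra.
Qed.

Lemma card_dotset_ge : (q <= 3 * #|dotset A|)%N.
Proof.
have q_gt0 : (0 < q)%N by apply/card_gt0P; exists 0.
have a4_gt0 : 0 < a ^+ 4.
  by rewrite exprn_gt0 // ltr0n (leq_trans _ A_large) // expn_gt0 q_gt0.
rewrite -(ler_nat rat) natrM -(ler_pM2r a4_gt0).
apply: le_trans (ler_wpM2l (ler0n _ q) pow4_le_card_dotset_energy) _.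
rewrite mulrCA (le_trans (ler_wpM2l (ler0n _ _) energy_le)) //.
by rewrite mulrCA mulrA.
Qed.

End DotProductEnergy.

Theorem corollary1p22 (k : nat) (hk : (0 < k)%N) :
  exists C c : rat, 0 < C /\ 0 < c /\
    forall (F : finFieldType), odd #|F| -> (#|F| %% 4 = 3)%N ->
    forall A : {set 'rV[F]_(4 * k + 2)},
      A \subset S0 F (4 * k + 2) ->
      C * (#|F|%:R) ^+ (2 * k + 1) <= (#|A|%:R : rat) ->
      c * (#|F|%:R) <= (#|distset A|%:R : rat).
Proof.
exists 1, 3%:R^-1; do 2!split => //.
move=> F oddF F3 A A_S0; rewrite mul1r -natrX ler_nat => A_large.
have two_neq0 := odd_card_natr2_neq0 oddF.
have sqr_neqN1 := card_3mod4_sqr_neqN1 F3 two_neq0.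
have n_eq : (4 * k + 2 = 2 * (2 * k + 1))%N by lia.
have odd_e : odd (2 * k + 1) by rewrite oddD oddM.
have := card_dotset_ge n_eq (card_S0_orth_le two_neq0 sqr_neqN1 n_eq odd_e)
  (card_S0 two_neq0 sqr_neqN1 n_eq odd_e) A_S0 A_large.
rewrite -(card_distset_S0 two_neq0 A_S0) -(ler_nat rat) natrM => q_le.
by rewrite ler_pdivrMl // mulrC.
Qed.
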